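(* In the setting below, let $B_t = \{i \in [n] : \tilde{x}_i\tilde{w}_t \leq -\frac{1}{2}\gamma\hat{w}_t\}$. If $\eta \geq \eta_0$, then for every integer $0\le t < \tau$, $$\left(1 - \frac{16}{\eta^3}\right)G(w_t) \leq \frac{1}{n}\sum_{i \in B_t}\frac{1}{\exp(a_t^i)+1} \leq G(w_t).$$
   Context: Dimension $d=2$. Data $x_1,\dots,x_n\in\mathbb{R}^2$ with $\|x_i\|\le 1$, linearly separable (some $w$ has $\langle w,x_i\rangle>0$ for all $i$). $F(w) = \frac{1}{n}\sum_{i=1}^n \log(1+\exp(-\langle w, x_i\rangle))$ and $G(w) = \frac{1}{n}\sum_{i=1}^n \frac{1}{\exp(\langle w, x_i\rangle)+1}$. Maximum margin $\gamma = \max_{\|w\|=1}\min_i \langle w, x_i\rangle$ with maximizer the unit vector $w_*$; $v_*$ is a fixed unit vector orthogonal to $w_*$. Gradient descent: $w_0=0$, $w_{t+1} = w_t - \eta\nabla F(w_t)$ with constant $\eta>0$. $\hat{w}_t = \langle w_t, w_*\rangle$, $\tilde{w}_t = \langle w_t, v_*\rangle$, $\tilde{x}_i = \langle x_i, v_*\rangle$, $a_t^i = \langle w_t, x_i\rangle$. $\tau = \min\{t\ge 0: F(w_t)\le 1/(8\eta)\}$. $\eta_0 = \max(n, \frac{32}{\gamma^2}\log\frac{256}{\gamma^2})$. *)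

(* concrete reals R; vectors of R^2 are pairs (R * R).
   Data points are x 0, ..., x (n-1) (paper's x_1, ..., x_n). *)
From Stdlib Require Import Reals List.
Import ListNotations.
Open Scope R_scope.

Definition vec2 := (R * R)%type.

Definition dot (u v : vec2) : R := fst u * fst v + snd u * snd v.
Definition vnorm (u : vec2) : R := sqrt (dot u u).
Definition vadd (u v : vec2) : vec2 := (fst u + fst v, snd u + snd v).
Definition vscale (c : R) (u : vec2) : vec2 := (c * fst u, c * snd u).
Definition vzero : vec2 := (0, 0).

Definition rsum (n : nat) (f : nat -> R) : R :=
  fold_right Rplus 0 (map f (seq 0 n)).

Definition vsum (n : nat) (f : nat -> vec2) : vec2 :=
  fold_right vadd vzero (map f (seq 0 n)).

Definition Frisk (n : nat) (x : nat -> vec2) (w : vec2) : R :=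
  / INR n * rsum n (fun i => ln (1 + exp (- dot w (x i)))).

Definition Grisk (n : nat) (x : nat -> vec2) (w : vec2) : R :=
  / INR n * rsum n (fun i => / (exp (dot w (x i)) + 1)).

(* Gradient of F, written out:  since d/dz log(1+exp(-z)) = -1/(exp z + 1),
   grad F(w) = -(1/n) sum_i x_i / (exp(<w,x_i>) + 1). *)
Definition gradF (n : nat) (x : nat -> vec2) (w : vec2) : vec2 :=
  vscale (- / INR n) (vsum n (fun i => vscale (/ (exp (dot w (x i)) + 1)) (x i))).

Fixpoint gd (n : nat) (x : nat -> vec2) (eta : R) (t : nat) : vec2 :=
  match t with
  | O => vzero
  | S t' => let w := gd n x eta t' in vadd w (vscale (- eta) (gradF n x w))
  end.

Definition eta0 (n : nat) (gamma : R) : R :=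
  Rmax (INR n) (32 / gamma ^ 2 * ln (256 / gamma ^ 2)).

From Stdlib Require Import Reals List Lra Lia Psatz Classical.
Open Scope R_scope.

(* Split G(w_t) into the terms indexed by B_t and the rest.  Expanding along the
   orthonormal basis w_*, v_* of R^2 gives a_t^i = what_t <x_i, w_*> + wtil_t xtil_i, so
   a_t^i >= gamma what_t / 2 for i outside B_t.  Every gradient step increases what_t,
   the first one by at least eta gamma / 2, hence for t >= 1 each remaining term is at
   most exp (- eta gamma^2 / 4) <= eta^-4 by the choice of eta_0 (B_0 is everything).
   Since t < tau, F(w_t) > 1/(8 eta), which forces G(w_t) > 1/(16 eta): either some
   a_t^i < 0 and G(w_t) > 1/(2n), or all a_t^i >= 0 and F <= 2G termwise.  So the
   remaining terms are at most eta^-4 < (16 / eta^3) G(w_t). *)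

Lemma rsum_S n f : rsum (S n) f = rsum n f + f n.
Proof.
  unfold rsum; rewrite seq_S, map_app, fold_right_app; simpl.
  generalize (map f (seq 0 n)); intro l; induction l as [|a l IH]; simpl; lra.
Qed.

Lemma rsum_ext n f g : (forall i, f i = g i) -> rsum n f = rsum n g.
Proof. intro H; unfold rsum; now rewrite (map_ext f g H). Qed.

Lemma rsum_plus n f g : rsum n (fun i => f i + g i) = rsum n f + rsum n g.
Proof. induction n as [|n IH]; [cbv [rsum]; simpl; lra|rewrite !rsum_S, IH; lra]. Qed.

Lemma rsum_scal n c f : rsum n (fun i => c * f i) = c * rsum n f.
Proof. induction n as [|n IH]; [cbv [rsum]; simpl; lra|rewrite !rsum_S, IH; lra]. Qed.

Lemma rsum_const n c : rsum n (fun _ => c) = INR n * c.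
Proof. induction n as [|n IH]; [cbv [rsum]; simpl; lra|rewrite rsum_S, IH, S_INR; lra]. Qed.

Lemma rsum_le n f g : (forall i, (i < n)%nat -> f i <= g i) -> rsum n f <= rsum n g.
Proof.
  induction n as [|n IH]; intro H; [cbv [rsum]; simpl; lra|].
  rewrite !rsum_S; apply Rplus_le_compat; [apply IH; intros; apply H|apply H]; lia.
Qed.

Lemma rsum_nonneg n f : (forall i, (i < n)%nat -> 0 <= f i) -> 0 <= rsum n f.
Proof.
  intro H; replace 0 with (INR n * 0) by ring; rewrite <- rsum_const.
  now apply rsum_le.
Qed.

Lemma rsum_ge_term n f i : (forall j, (j < n)%nat -> 0 <= f j) -> (i < n)%nat ->
  f i <= rsum n f.
Proof.
  induction n as [|n IH]; intros H Hi; [lia|]; rewrite rsum_S.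
  assert (Hf : 0 <= f n) by (apply H; lia).
  destruct (Nat.eq_dec i n) as [->|Hin].
  - assert (0 <= rsum n f) by (apply rsum_nonneg; intros; apply H; lia); lra.
  - assert (f i <= rsum n f) by (apply IH; [intros; apply H|]; lia); lra.
Qed.

Lemma inv_INR_nonneg n : 0 <= / INR n.
Proof.
  destruct n as [|n]; [simpl; rewrite Rinv_0; lra|].
  left; apply Rinv_0_lt_compat, lt_0_INR; lia.
Qed.

Lemma rsum_if_le n (P : nat -> Prop) (dec : forall i, {P i} + {~ P i}) f :
  (forall i, (i < n)%nat -> 0 <= f i) ->
  rsum n (fun i => if dec i then f i else 0) <= rsum n f.
Proof. intro H; apply rsum_le; intros i Hi; specialize (H i Hi); destruct (dec i); lra. Qed.

Lemma avg_le_avg_if_add n (P : nat -> Prop) (dec : forall i, {P i} + {~ P i}) f e :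
  (0 < n)%nat -> 0 <= e -> (forall i, (i < n)%nat -> ~ P i -> f i <= e) ->
  / INR n * rsum n f <= / INR n * rsum n (fun i => if dec i then f i else 0) + e.
Proof.
  intros Hn He H; assert (0 < INR n) by (apply lt_0_INR; lia).
  replace e with (/ INR n * (INR n * e)) at 1 by (field; lra).
  rewrite <- rsum_const, <- Rmult_plus_distr_l, <- rsum_plus.
  apply Rmult_le_compat_l; [left; now apply Rinv_0_lt_compat|].
  apply rsum_le; intros i Hi; destruct (dec i) as [_|HP]; [|specialize (H i Hi HP)]; lra.
Qed.

Lemma dot_comm u v : dot u v = dot v u.
Proof. unfold dot; ring. Qed.

Lemma dot_vadd u v z : dot (vadd u v) z = dot u z + dot v z.
Proof. unfold dot, vadd; simpl; ring. Qed.

Lemma dot_vscale c u z : dot (vscale c u) z = c * dot u z.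
Proof. unfold dot, vscale; simpl; ring. Qed.

Lemma dot_vzero z : dot vzero z = 0.
Proof. unfold dot, vzero; simpl; ring. Qed.

Lemma dot_vsum n f z : dot (vsum n f) z = rsum n (fun i => dot (f i) z).
Proof.
  unfold vsum, rsum; induction (seq 0 n) as [|i l IH]; simpl;
    [apply dot_vzero|now rewrite dot_vadd, IH].
Qed.

Lemma dot_self_nonneg u : 0 <= dot u u.
Proof. unfold dot; nra. Qed.

Lemma dot_self_pos u v : 0 < dot u v -> 0 < dot u u.
Proof.
  destruct u as [a b], v as [p q]; unfold dot; simpl; intro H.
  destruct (Req_dec a 0) as [->|Ha]; [destruct (Req_dec b 0) as [->|Hb]; [lra|]|].
  - pose proof (Rsqr_pos_lt b Hb); unfold Rsqr in *; lra.
  - pose proof (Rsqr_pos_lt a Ha); unfold Rsqr in *; nra.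
Qed.

Lemma dot_self_vnorm u : dot u u = vnorm u * vnorm u.
Proof. unfold vnorm; rewrite sqrt_sqrt; [reflexivity|apply dot_self_nonneg]. Qed.

Lemma vnorm_normalize u : 0 < dot u u -> vnorm (vscale (/ vnorm u) u) = 1.
Proof.
  intro Hu; assert (0 < vnorm u) by (apply sqrt_lt_R0; exact Hu).
  unfold vnorm at 1; rewrite dot_vscale, dot_comm, dot_vscale, dot_self_vnorm.
  replace (/ vnorm u * (/ vnorm u * (vnorm u * vnorm u))) with 1 by (field; lra).
  apply sqrt_1.
Qed.

(* In R^2, an orthonormal pair (e, f) satisfies f = k (-e2, e1) with k = e1 f2 - e2 f1 = +-1. *)
Lemma dot_orthonormal_expand e f u v :
  dot e e = 1 -> dot f f = 1 -> dot f e = 0 ->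
  dot u v = dot u e * dot v e + dot u f * dot v f.
Proof.
  destruct e as [a b], f as [c d], u as [u1 u2], v as [v1 v2]; unfold dot; simpl.
  intros He Hf Hfe.
  set (k := a * d - b * c).
  assert (Hc : c = - b * k).
  { transitivity (c * (a * a + b * b)); [rewrite He; ring|].
    transitivity (a * (c * a + d * b) - b * k); [unfold k; ring|rewrite Hfe; ring]. }
  assert (Hd : d = a * k).
  { transitivity (d * (a * a + b * b)); [rewrite He; ring|].
    transitivity (b * (c * a + d * b) + a * k); [unfold k; ring|rewrite Hfe; ring]. }
  assert (Hk : k * k = 1).
  { rewrite <- Hf, Hc, Hd; transitivity (k * k * (a * a + b * b)); [rewrite He|]; ring. }
  rewrite Hc, Hd.
  replace ((u1 * (- b * k) + u2 * (a * k)) * (v1 * (- b * k) + v2 * (a * k)))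
    with (k * k * ((u2 * a - u1 * b) * (v2 * a - v1 * b))) by ring.
  rewrite Hk; transitivity ((a * a + b * b) * (u1 * v1 + u2 * v2)); [rewrite He|]; ring.
Qed.

Lemma exp_le_compat a b : a <= b -> exp a <= exp b.
Proof. intros [Hab|Hab]; [left; now apply exp_increasing|right; now rewrite Hab]. Qed.

Lemma logistic_pos a : 0 < / (exp a + 1).
Proof. apply Rinv_0_lt_compat; pose proof (exp_pos a); lra. Qed.

Lemma logistic_le_exp_opp a : / (exp a + 1) <= exp (- a).
Proof.
  rewrite exp_Ropp; pose proof (exp_pos a).
  apply Rinv_le_contravar; lra.
Qed.

Lemma logistic_gt_half a : a < 0 -> / 2 < / (exp a + 1).
Proof.
  intro Ha; assert (exp a < 1) by (rewrite <- exp_0; now apply exp_increasing).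
  pose proof (exp_pos a); apply Rinv_lt_contravar; nra.
Qed.

Lemma ln_le_sub_1 y : 0 < y -> ln y <= y - 1.
Proof. intro Hy; pose proof (exp_ineq1_le (ln y)); rewrite exp_ln in *; lra. Qed.

(* ln (1 + e^-a) <= e^-a, and e^-a <= 2 / (e^a + 1) iff e^a >= 1. *)
Lemma logistic_loss_le_2_logistic a : 0 <= a -> ln (1 + exp (- a)) <= 2 * / (exp a + 1).
Proof.
  intro Ha; pose proof (exp_pos (- a)).
  assert (H1 : 1 <= exp a) by (rewrite <- exp_0; apply exp_le_compat; lra).
  eapply Rle_trans; [apply ln_le_sub_1; lra|].
  rewrite exp_Ropp; apply Rmult_le_reg_l with (exp a * (exp a + 1)); [nra|].
  field_simplify; lra.
Qed.

Lemma Grisk_ge_inv_2n n x w :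
  (exists i, (i < n)%nat /\ dot w (x i) < 0) -> / (2 * INR n) < Grisk n x w.
Proof.
  intros [i [Hi Ha]]; assert (0 < INR n) by (apply lt_0_INR; lia).
  pose proof (logistic_gt_half _ Ha).
  assert (/ (exp (dot w (x i)) + 1) <= rsum n (fun j => / (exp (dot w (x j)) + 1)))
    by (apply (rsum_ge_term n (fun j => / (exp (dot w (x j)) + 1)));
        [intros; left; apply logistic_pos|exact Hi]).
  unfold Grisk; rewrite Rinv_mult, Rmult_comm.
  apply Rmult_lt_compat_l; [now apply Rinv_0_lt_compat|lra].
Qed.

Lemma Frisk_le_2_Grisk n x w :
  (forall i, (i < n)%nat -> 0 <= dot w (x i)) -> Frisk n x w <= 2 * Grisk n x w.
Proof.
  intro H; unfold Frisk, Grisk; rewrite <- Rmult_assoc, (Rmult_comm 2), Rmult_assoc.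
  apply Rmult_le_compat_l; [apply inv_INR_nonneg|].
  rewrite <- rsum_scal; apply rsum_le; intros i Hi.
  now apply logistic_loss_le_2_logistic, H.
Qed.

Lemma Grisk_gt_of_Frisk_gt n x w eta :
  (0 < n)%nat -> INR n <= eta -> / (8 * eta) < Frisk n x w -> / (16 * eta) < Grisk n x w.
Proof.
  intros Hn Heta HF; assert (0 < INR n) by (apply lt_0_INR; lia).
  destruct (classic (exists i, (i < n)%nat /\ dot w (x i) < 0)) as [Hneg|Hpos].
  - eapply Rle_lt_trans; [|now apply Grisk_ge_inv_2n].
    apply Rinv_le_contravar; lra.
  - assert (Frisk n x w <= 2 * Grisk n x w).
    { apply Frisk_le_2_Grisk; intros i Hi; apply Rnot_lt_le; intro Ha; eauto. }
    replace (/ (16 * eta)) with (/ (8 * eta) / 2) by (field; lra); lra.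
Qed.

Lemma margin_pos n x gamma :
  (0 < n)%nat ->
  (exists w : vec2, forall i, (i < n)%nat -> 0 < dot w (x i)) ->
  (forall w : vec2, vnorm w = 1 -> exists i, (i < n)%nat /\ dot w (x i) <= gamma) ->
  0 < gamma.
Proof.
  intros Hn [w Hw] Hmax.
  assert (Hww : 0 < dot w w) by (apply (dot_self_pos w (x 0%nat)), Hw, Hn).
  assert (0 < / vnorm w) by (apply Rinv_0_lt_compat, sqrt_lt_R0, Hww).
  destruct (Hmax _ (vnorm_normalize w Hww)) as [i [Hi Hle]].
  rewrite dot_vscale in Hle; specialize (Hw i Hi); nra.
Qed.

(* ln eta = ln (eta c / 32) + ln (32 / c), and each summand is at most eta c / 32. *)
Lemma ln_le_of_step_size c eta :
  0 < c -> 0 < eta -> 32 / c * ln (256 / c) <= eta -> 16 * ln eta <= eta * c.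
Proof.
  intros Hc Heta HL.
  assert (Hsplit : ln eta = ln (eta * c / 32) + ln (32 / c)).
  { rewrite <- ln_mult by (apply Rdiv_lt_0_compat; nra).
    f_equal; field; lra. }
  assert (ln (eta * c / 32) <= eta * c / 32 - 1)
    by (apply ln_le_sub_1, Rdiv_lt_0_compat; nra).
  assert (ln (32 / c) <= ln (256 / c)).
  { left; apply ln_increasing; [apply Rdiv_lt_0_compat; lra|].
    apply Rmult_lt_compat_r; [apply Rinv_0_lt_compat|]; lra. }
  assert (ln (256 / c) <= eta * c / 32).
  { replace (ln (256 / c)) with (c / 32 * (32 / c * ln (256 / c))) by (field; lra).
    replace (eta * c / 32) with (c / 32 * eta) by field.
    apply Rmult_le_compat_l; [lra|exact HL]. }
  lra.
Qed.

Lemma exp_le_inv_pow4_of_step_size c eta :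
  0 < c -> 0 < eta -> 32 / c * ln (256 / c) <= eta -> exp (- (eta * c / 4)) <= / eta ^ 4.
Proof.
  intros Hc Heta HL; pose proof (ln_le_of_step_size c eta Hc Heta HL).
  rewrite <- (exp_ln (eta ^ 4)), <- exp_Ropp, ln_pow by (try apply pow_lt; lra).
  apply exp_le_compat; simpl INR; lra.
Qed.

Lemma logistic_le_inv_pow4_of_step_size gamma eta what a :
  0 < gamma -> 0 < eta -> 32 / gamma ^ 2 * ln (256 / gamma ^ 2) <= eta ->
  eta * gamma / 2 <= what -> gamma * what / 2 <= a -> / (exp a + 1) <= / eta ^ 4.
Proof.
  intros Hgamma Heta Hstep Hwhat Ha.
  eapply Rle_trans; [apply logistic_le_exp_opp|].
  eapply Rle_trans; [|apply (exp_le_inv_pow4_of_step_size (gamma ^ 2)); auto; nra].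
  apply exp_le_compat; nra.
Qed.

Lemma dot_ge_half_margin_of_not_in_B gamma wstar vstar w u :
  vnorm wstar = 1 -> vnorm vstar = 1 -> dot vstar wstar = 0 ->
  gamma <= dot wstar u -> 0 <= dot w wstar ->
  ~ (dot u vstar * dot w vstar <= - (1 / 2) * gamma * dot w wstar) ->
  gamma * dot w wstar / 2 <= dot w u.
Proof.
  intros Hw Hv Hvw Hu Hwhat HB; apply Rnot_le_lt in HB.
  rewrite (dot_orthonormal_expand wstar vstar w u), (dot_comm u wstar)
    by (rewrite ?dot_self_vnorm, ?Hw, ?Hv; lra).
  nra.
Qed.

Section GradientDescent.

Variables (n : nat) (x : nat -> vec2) (eta : R).
Hypotheses (Hn : (0 < n)%nat) (Heta : 0 <= eta).

Lemma gd_S_dot s z :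
  dot (gd n x eta (S s)) z = dot (gd n x eta s) z +
    eta * / INR n * rsum n (fun i => / (exp (dot (gd n x eta s) (x i)) + 1) * dot (x i) z).
Proof.
  cbn [gd]; unfold gradF; rewrite dot_vadd, !dot_vscale, dot_vsum.
  rewrite (rsum_ext _ _ _ (fun i => dot_vscale _ (x i) z)); ring.
Qed.

Variables (z : vec2) (m : R).
Hypotheses (Hm : 0 <= m) (Hz : forall i, (i < n)%nat -> m <= dot z (x i)).

Lemma gd_dot_le_S s : dot (gd n x eta s) z <= dot (gd n x eta (S s)) z.
Proof.
  rewrite gd_S_dot.
  assert (0 <= rsum n (fun i => / (exp (dot (gd n x eta s) (x i)) + 1) * dot (x i) z)).
  { apply rsum_nonneg; intros i Hi; specialize (Hz i Hi); rewrite dot_comm in Hz.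
    apply Rmult_le_pos; [left; apply logistic_pos|lra]. }
  assert (0 <= eta * / INR n) by (apply Rmult_le_pos; [lra|apply inv_INR_nonneg]); nra.
Qed.

Lemma gd_dot_ge s : eta * m / 2 <= dot (gd n x eta (S s)) z.
Proof.
  induction s as [|s IH]; [|eapply Rle_trans; [exact IH|apply gd_dot_le_S]].
  rewrite gd_S_dot; cbn [gd]; rewrite dot_vzero.
  assert (0 < INR n) by (apply lt_0_INR; lia).
  assert (INR n * (m / 2) <= rsum n (fun i => / (exp (dot vzero (x i)) + 1) * dot (x i) z)).
  { rewrite <- rsum_const; apply rsum_le; intros i Hi.
    rewrite dot_vzero, exp_0; specialize (Hz i Hi); rewrite dot_comm in Hz; lra. }
  apply Rle_trans with (0 + eta * / INR n * (INR n * (m / 2))); [right; field; lra|].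
  apply Rplus_le_compat_l, Rmult_le_compat_l; [|assumption].
  apply Rmult_le_pos; [lra|apply inv_INR_nonneg].
Qed.

Lemma gd_dot_nonneg s : 0 <= dot (gd n x eta s) z.
Proof.
  destruct s as [|s]; [cbn [gd]; rewrite dot_vzero; lra|].
  pose proof (gd_dot_ge s); nra.
Qed.

End GradientDescent.

Theorem lemma14
  (n : nat) (x : nat -> vec2) (gamma eta : R) (wstar vstar : vec2)
  (* n >= 1 data points, all of norm at most 1 *)
  (Hn : (0 < n)%nat)
  (Hx : forall i, (i < n)%nat -> vnorm (x i) <= 1)
  (* linear separability *)
  (Hsep : exists w : vec2, forall i, (i < n)%nat -> 0 < dot w (x i))
  (* gamma = max_{||w||=1} min_i <w, x_i>, attained at the unit vector wstar *)
  (Hwstar_unit : vnorm wstar = 1)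
  (Hgamma_le : forall i, (i < n)%nat -> gamma <= dot wstar (x i))
  (Hgamma_att : exists i, (i < n)%nat /\ dot wstar (x i) = gamma)
  (Hgamma_max : forall w : vec2, vnorm w = 1 ->
                  exists i, (i < n)%nat /\ dot w (x i) <= gamma)
  (* vstar a unit vector orthogonal to wstar *)
  (Hvstar_unit : vnorm vstar = 1)
  (Hvstar_orth : dot vstar wstar = 0)
  (* step size *)
  (Heta : eta0 n gamma <= eta)
  (t : nat)
  (* t < tau, i.e. F(w_s) > 1/(8 eta) for all s <= t *)
  (Htau : forall s, (s <= t)%nat -> Frisk n x (gd n x eta s) > / (8 * eta)) :
  let w := gd n x eta t in
  let what := dot w wstar in
  let wtil := dot w vstar in
  let SB := / INR n * rsum n (fun i =>
              if Rle_dec (dot (x i) vstar * wtil) (- (1/2) * gamma * what)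
              then / (exp (dot w (x i)) + 1) else 0) in
  (1 - 16 / eta ^ 3) * Grisk n x w <= SB /\ SB <= Grisk n x w.
Proof.
  intros w what wtil SB.
  assert (Hn_eta : INR n <= eta) by (eapply Rle_trans; [apply Rmax_l|exact Heta]).
  assert (Hstep : 32 / gamma ^ 2 * ln (256 / gamma ^ 2) <= eta)
    by (eapply Rle_trans; [apply Rmax_r|exact Heta]).
  assert (Heta_pos : 0 < eta) by (pose proof (lt_0_INR n Hn); lra).
  assert (Hgamma : 0 < gamma) by (eapply margin_pos; eassumption).
  assert (Hwhat : 0 <= what) by (apply (gd_dot_nonneg n x eta Hn) with gamma; auto; lra).
  assert (HG : / (16 * eta) < Grisk n x w)
    by (apply Grisk_gt_of_Frisk_gt; [exact Hn|exact Hn_eta|apply Htau, le_n]).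
  assert (Hout : forall i, (i < n)%nat ->
            ~ (dot (x i) vstar * wtil <= - (1/2) * gamma * what) ->
            / (exp (dot w (x i)) + 1) <= / eta ^ 4).
  { intros i Hi HB; destruct t as [|s].
    - exfalso; apply HB; unfold wtil, what, w; cbn [gd]; rewrite !dot_vzero; lra.
    - apply (logistic_le_inv_pow4_of_step_size gamma eta what); auto.
      + apply (gd_dot_ge n x eta Hn); auto; lra.
      + apply dot_ge_half_margin_of_not_in_B with vstar; auto. }
  split.
  - assert (Hsplit : Grisk n x w <= SB + / eta ^ 4)
      by (apply avg_le_avg_if_add; auto; left; apply Rinv_0_lt_compat, pow_lt; lra).
    assert (/ eta ^ 4 = 16 / eta ^ 3 * / (16 * eta)) by (field; lra).
    assert (16 / eta ^ 3 * / (16 * eta) < 16 / eta ^ 3 * Grisk n x w)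
      by (apply Rmult_lt_compat_l; [apply Rdiv_lt_0_compat; [|apply pow_lt]|]; lra).
    lra.
  - apply Rmult_le_compat_l; [apply inv_INR_nonneg|].
    apply rsum_if_le; intros; left; apply logistic_pos.
Qed.
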